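(* Let $\mathcal P$ be a pyramid. If there exist $r>0$ and $0<\kappa<1$ such that $\operatorname{Cov}(\mathcal P;r,\kappa)=+\infty$, then there is no mm-space $X$ with $\mathcal P=\mathcal P_X$.
   Context: An mm-space is a triple $(X,d_X,\mu_X)$ with $(X,d_X)$ complete separable metric and $\mu_X$ a Borel probability measure; $\mathcal X$ is the set of mm-isomorphism classes. $Y\prec X$ means there is a 1-Lipschitz $f:X\to Y$ with $f_*\mu_X=\mu_Y$. The box distance $\square(X,Y)$ is the infimum of $\max\{\operatorname{dis}(S),1-\pi(S)\}$ over couplings $\pi$ of $\mu_X,\mu_Y$ and Borel $S\subset X\times Y$, $\operatorname{dis}(S)=\sup\{|d_X(x,x')-d_Y(y,y')|:(x,y),(x',y')\in S\}$. A pyramid is a nonempty box-closed subset of $\mathcal X$ closed downward under $\prec$ and directed; $\mathcal P_X=\{Y\in\mathcal X:Y\prec X\}$. For an mm-space $X$: $\operatorname{Cov}(X;r,\kappa)=\min\{\#\mathcal N:\mathcal N\subset X,\ \mu_X(B_r(\mathcal N))\ge1-\kappa\}$ with $B_r(\mathcal N)=\{x:d_X(x,\mathcal N)\le r\}$; for a pyramid, $\operatorname{Cov}(\mathcal P;r,\kappa)=\sup_{X\in\mathcal P}\operatorname{Cov}(X;r,\kappa)$. *)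

From HB Require Import structures.
From mathcomp Require Import all_boot all_order all_algebra.
From mathcomp Require Import all_classical all_reals all_analysis.
Import Order.TTheory GRing.Theory Num.Theory.

Set Implicit Arguments.
Unset Strict Implicit.
Unset Printing Implicit Defensive.

Local Open Scope classical_set_scope.
Local Open Scope ring_scope.

Definition metric_open (R : realType) (T : Type) (d : T -> T -> R)
  : set (set T) :=
  [set U | forall x, U x -> exists2 e : R, 0 < e & [set y | d x y < e] `<=` U].

Definition borelT (R : realType) (T : pointedType) (d : T -> T -> R) :=
  g_sigma_algebraType (metric_open d).

(* An mm-space: complete separable metric space with a Borel probability
   measure.  The carrier is a pointedType (it is nonempty, since it carries a
   probability measure). *)
Record mmspace (R : realType) := MMSpace {
  mm_carrier : pointedType;
  mm_dist : mm_carrier -> mm_carrier -> R;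
  mm_dist_refl : forall x, mm_dist x x = 0;
  mm_dist_sep : forall x y, mm_dist x y = 0 -> x = y;
  mm_dist_sym : forall x y, mm_dist x y = mm_dist y x;
  mm_dist_tri : forall x y z, mm_dist x z <= mm_dist x y + mm_dist y z;
  mm_complete : forall u : nat -> mm_carrier,
    (forall e : R, 0 < e -> exists N : nat, forall m n : nat,
        (N <= m)%N -> (N <= n)%N -> mm_dist (u m) (u n) < e) ->
    exists x : mm_carrier, forall e : R, 0 < e ->
        exists N : nat, forall n : nat, (N <= n)%N -> mm_dist (u n) x < e;
  mm_separable : exists s : nat -> mm_carrier,
    forall (x : mm_carrier) (e : R), 0 < e -> exists n : nat, mm_dist x (s n) < e;
  mm_measure : probability (borelT mm_dist) R }.

Arguments mm_dist {R} _ _ _.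
Arguments mm_measure {R} _.

Definition mmT (R : realType) (X : mmspace R) := borelT (mm_dist X).

(* Y ≺ X : there is a 1-Lipschitz f : X -> Y with f_* mu_X = mu_Y. *)
Definition dominates (R : realType) (Y X : mmspace R) : Prop :=
  exists f : mm_carrier X -> mm_carrier Y,
    (forall x x' : mm_carrier X, mm_dist Y (f x) (f x') <= mm_dist X x x') /\
    (forall B : set (mmT Y), measurable B ->
        mm_measure Y B = mm_measure X (f @^-1` B)).

(* Couplings of mu_X and mu_Y (Borel probability measures on X x Y; for
   separable spaces the Borel sigma-algebra of X x Y is the product one). *)
Definition coupling (R : realType) (X Y : mmspace R)
    (pi : probability (mmT X * mmT Y)%type R) : Prop :=
  (forall A : set (mmT X), measurable A -> pi (A `*` setT) = mm_measure X A) /\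
  (forall B : set (mmT Y), measurable B -> pi (setT `*` B) = mm_measure Y B).

Definition dis (R : realType) (X Y : mmspace R)
    (S : set (mm_carrier X * mm_carrier Y)) : \bar R :=
  ereal_sup [set e | exists p q, S p /\ S q /\
      e = (`| mm_dist X p.1 q.1 - mm_dist Y p.2 q.2 |)%:E].

Definition box (R : realType) (X Y : mmspace R) : \bar R :=
  ereal_inf [set e | exists (pi : probability (mmT X * mmT Y)%type R)
      (S : set (mmT X * mmT Y)),
      coupling pi /\ measurable S /\
      e = maxe (dis S) (1%E - pi S)%E].

(* Box-closedness (closedness for the box metric; in a metric space, closed
   = sequentially closed). *)
Definition box_closed (R : realType) (P : (mmspace R -> Prop)) : Prop :=
  forall (Xs : nat -> mmspace R) (X : mmspace R),
    (forall n, P (Xs n)) ->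
    (forall e : R, 0 < e -> exists N : nat, forall n : nat, (N <= n)%N ->
        (box (Xs n) X < e%:E)%E) ->
    P X.

Definition pyramid (R : realType) (P : (mmspace R -> Prop)) : Prop :=
  [/\ exists X, P X,
      box_closed P,
      (forall X Y, P X -> dominates Y X -> P Y) &
      (forall Y Y', P Y -> P Y' ->
         exists Z, [/\ P Z, dominates Y Z & dominates Y' Z])].

Definition pyramid_of (R : realType) (X : mmspace R) : (mmspace R -> Prop) :=
  fun Y => dominates Y X.

Definition rnbhd (R : realType) (X : mmspace R) (N : seq (mm_carrier X)) (r : R)
  : set (mmT X) :=
  [set x | exists2 y, y \in N & mm_dist X x y <= r].

Definition Cov (R : realType) (X : mmspace R) (r kappa : R) : \bar R :=
  ereal_inf [set ((size N)%:R)%:E | N in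
     [set N : seq (mm_carrier X) | ((1 - kappa)%:E <= mm_measure X (rnbhd N r))%E]].

Definition CovP (R : realType) (P : (mmspace R -> Prop)) (r kappa : R) : \bar R :=
  ereal_sup [set e | exists X : mmspace R, P X /\ e = Cov X r kappa].

(* If P = P_X, every member Y of P is the image of X under a 1-Lipschitz,
   measure-preserving map f, and f maps a finite r-net N of X of mass at least
   1 - kappa to the r-net f(N) of Y of mass at least 1 - kappa.  Hence
   Cov(P_X; r, kappa) <= #N, and such an N exists because X is separable and
   mu_X is continuous from below along the r-neighbourhoods of longer and
   longer initial segments of a dense sequence. *)
From HB Require Import structures.
From mathcomp Require Import all_boot all_order all_algebra.
From mathcomp Require Import all_classical all_reals all_analysis.
From mathcomp Require Import lra.
Import Order.TTheory GRing.Theory Num.Theory.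
Local Open Scope classical_set_scope.
Local Open Scope ring_scope.

Lemma exhaustion_probability_ge {R : realType} {d : measure_display}
    {T : measurableType d} (P : probability T R) (F : (set T)^nat) (k : R) :
  (forall n, measurable (F n)) -> nondecreasing_seq F ->
  \bigcup_n F n = setT -> 0 < k ->
  exists n, ((1 - k)%:E <= P (F n))%E.
Proof.
move=> mF ndF F_setT k0.
have mU : measurable (\bigcup_n F n) by rewrite F_setT.
have PF1 := nondecreasing_cvg_mu (mu := P) mF mU ndF.
rewrite F_setT [X in _ --> X](_ : _ = 1%E) in PF1; last exact: probability_setT.
have ndPF : nondecreasing_seq (P \o F).
  by move=> m n mn; apply: le_measure; rewrite ?inE //; apply/subsetPset/ndF.
have lim_gt : ((1 - k)%:E < lim ((P \o F) n @[n --> \oo]))%E.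
  by rewrite (cvg_lim _ PF1) // lte_fin; lra.
have [N _ PFN] := lte_lim ndPF (cvgP _ PF1) lim_gt.
by exists N; apply: PFN => /=.
Qed.

Section rnbhd.
Set Implicit Arguments.
Unset Strict Implicit.
Variable R : realType.

Lemma measurable_lipschitz_sublevel (X : mmspace R) (g : mm_carrier X -> R)
    (r : R) :
  (forall x z, g x <= g z + mm_dist X x z) ->
  measurable ([set x | g x <= r] : set (mmT X)).
Proof.
move=> gLip.
have -> : [set x | g x <= r] = ~` [set x | r < g x].
  by apply/seteqP; split => x /=; rewrite real_ltNge ?num_real //; case: (_ <= _).
apply: measurableC; apply: sub_sigma_algebra => x /= rx.
exists (g x - r) => [|z /= xz]; first by rewrite subr_gt0.
have := gLip x z; have := mm_dist_sym x z; lra.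
Qed.

Lemma measurable_preimage_rnbhd (X Y : mmspace R)
    (f : mm_carrier X -> mm_carrier Y) (N : seq (mm_carrier Y)) (r : R) :
  (forall x x', mm_dist Y (f x) (f x') <= mm_dist X x x') ->
  measurable (f @^-1` rnbhd N r : set (mmT X)).
Proof.
move=> fLip; elim: N => [|y N IHN].
  by rewrite (_ : _ @^-1` _ = set0) //; apply/seteqP; split => x // [].
have -> : f @^-1` rnbhd (y :: N) r
    = [set x | mm_dist Y (f x) y <= r] `|` f @^-1` rnbhd N r.
  apply/seteqP; split => x /=.
    by move=> [z]; rewrite inE => /orP[/eqP -> | zN] fxz; [left | right; exists z].
  case=> [fxy | [z zN fxz]]; first by exists y; rewrite ?mem_head.
  by exists z; rewrite // inE zN orbT.
apply: (@measurableU _ (mmT X)) => //; apply: measurable_lipschitz_sublevel => x z.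
have := mm_dist_tri (f x) (f z) y; have := fLip x z; lra.
Qed.

Lemma measurable_rnbhd (X : mmspace R) (N : seq (mm_carrier X)) (r : R) :
  measurable (rnbhd N r).
Proof. exact: (@measurable_preimage_rnbhd X X id). Qed.

Lemma rnbhd_sub_preimage_map (X Y : mmspace R)
    (f : mm_carrier X -> mm_carrier Y) (N : seq (mm_carrier X)) (r : R) :
  (forall x x', mm_dist Y (f x) (f x') <= mm_dist X x x') ->
  rnbhd N r `<=` f @^-1` rnbhd (map f N) r.
Proof.
move=> fLip x [y yN xy]; exists (f y); first exact: map_f.
exact: le_trans (fLip _ _) xy.
Qed.

Lemma Cov_dominated_le (X Y : mmspace R) (N : seq (mm_carrier X)) (r k : R) :
  dominates Y X -> ((1 - k)%:E <= mm_measure X (rnbhd N r))%E ->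
  (Cov Y r k <= (size N)%:R%:E)%E.
Proof.
case=> f [fLip f_push] NX.
apply: ereal_inf_lbound; exists (map f N); last by rewrite size_map.
rewrite /= f_push; last exact: measurable_rnbhd.
apply: (le_trans NX); apply: le_measure; rewrite ?inE.
- exact: measurable_rnbhd.
- exact: measurable_preimage_rnbhd.
- exact: rnbhd_sub_preimage_map.
Qed.

Lemma nondecreasing_rnbhd_mkseq (X : mmspace R) (s : nat -> mm_carrier X)
    (r : R) :
  nondecreasing_seq (fun n => rnbhd (mkseq s n) r).
Proof.
move=> m n mn; apply/subsetPset => x [_ /mapP[i + ->] xsi].
rewrite !mem_iota !add0n /= => im.
by exists (s i); rewrite // map_f // mem_iota add0n (leq_trans im).
Qed.

Lemma bigcup_rnbhd_mkseq (X : mmspace R) (s : nat -> mm_carrier X) (r : R) :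
  (forall x e, 0 < e -> exists n, mm_dist X x (s n) < e) -> 0 < r ->
  \bigcup_n rnbhd (mkseq s n) r = setT.
Proof.
move=> s_dense r0; rewrite -subTset => x _.
have [n xsn] := s_dense x r r0.
exists n.+1 => //; exists (s n); last exact: ltW.
by rewrite map_f // mem_iota add0n ltnSn.
Qed.

Lemma exists_rnbhd_ge (X : mmspace R) (r k : R) : 0 < r -> 0 < k ->
  exists N : seq (mm_carrier X), ((1 - k)%:E <= mm_measure X (rnbhd N r))%E.
Proof.
move=> r0 k0; have [s s_dense] := mm_separable X.
have [n Nn] := exhaustion_probability_ge (mm_measure X) _ k
  (fun n => measurable_rnbhd (mkseq s n) r)
  (nondecreasing_rnbhd_mkseq s r) (bigcup_rnbhd_mkseq s_dense r0) k0.
by exists (mkseq s n).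
Qed.

Lemma CovP_pyramid_of_bounded (X : mmspace R) (r k : R) : 0 < r -> 0 < k ->
  exists n : nat, (CovP (pyramid_of X) r k <= n%:R%:E)%E.
Proof.
move=> r0 k0; have [N NX] := @exists_rnbhd_ge X r k r0 k0.
exists (size N); apply: ge_ereal_sup => _ [Y [YX ->]].
exact: Cov_dominated_le YX NX.
Qed.

End rnbhd.

Theorem corollary6p7 (R : realType) (P : (mmspace R -> Prop)) :
  pyramid P ->
  (exists r kappa : R, [/\ 0 < r, 0 < kappa, kappa < 1 &
      CovP P r kappa = +oo%E]) ->
  ~ (exists X : mmspace R, P = pyramid_of X).
Proof.
move=> _ [r [k [r0 k0 _ CovP_oo]]] [X PX].
have [n] := CovP_pyramid_of_bounded X r0 k0.
by rewrite -PX CovP_oo leye_eq.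
Qed.
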